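(* Let $n\ge5$ and let $f(x)=x^n+a_2x^{n-2}+a_3x^{n-3}+\dots+a_{n-1}x+a_n$ be a polynomial (with zero coefficient of $x^{n-1}$) all of whose roots are real. Then $$\Big(\frac{24}{n}(a_2^2-2a_4)\Big)^{1/4}\le\operatorname{spn}(f)\le 2\,(a_2^2-2a_4)^{1/4}.$$
   Context: If $x_1,\dots,x_n$ are the roots of $f$, the span of $f$ is $\operatorname{spn}(f)=\max_{i,j}|x_i-x_j|$. *)

From mathcomp Require Import all_boot all_order all_algebra.
Set Implicit Arguments. Unset Strict Implicit. Unset Printing Implicit Defensive.
Import Order.TTheory GRing.Theory Num.Theory.
Local Open Scope ring_scope.

Definition spn_seq (R : realDomainType) (s : seq R) : R :=
  \big[Num.max/0]_(x <- s) \big[Num.max/0]_(y <- s) `|x - y|.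

Definition root4 (R : rcfType) (x : R) : R := Num.sqrt (Num.sqrt x).

From mathcomp Require Import all_boot all_order all_algebra.
From mathcomp Require Import ring lra.
Set Implicit Arguments.
Unset Strict Implicit.
Unset Printing Implicit Defensive.
Import Order.TTheory GRing.Theory Num.Theory.
Local Open Scope ring_scope.

(** With the roots [x_i] summing to zero, Newton's identities give
    [a_2^2 - 2 a_4 = p_4 / 2] for the power sum [p_4 = sum x_i^4], and the span
    is [M - m] for the extreme roots [m <= M].  The upper bound follows from
    [(M - m)^4 <= 8 (m^4 + M^4) <= 8 p_4].  For the lower bound, every root lies
    in [[m, M]], where [x^4] is below its chord [a + b x]; summing over the roots
    kills the linear term, so [p_4 <= n a], and [12 a <= (M - m)^4] because
    [(M - m)^4 - 12 a] is a perfect square. *)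

Fixpoint esym {R : comNzRingType} (k : nat) (s : seq R) : R :=
  match s with
  | [::] => if k is 0%N then 1 else 0
  | x :: s' => if k is k'.+1 then esym k s' + x * esym k' s' else 1
  end.

Definition psum {R : comNzRingType} (k : nat) (s : seq R) : R := \sum_(x <- s) x ^+ k.

Section Coefficients.
Variable R : comNzRingType.
Implicit Types s : seq R.

Lemma esym0 s : esym 0 s = 1.
Proof. by case: s. Qed.

Lemma esym_gt_size s k : (size s < k)%N -> esym k s = 0.
Proof.
elim: s k => [|x s IH] [|k] //= ltsk.
by rewrite !IH ?mulr0 ?addr0 // ltnW.
Qed.

Lemma coef_prod_XsubC_esym s k : (k <= size s)%N ->
  (\prod_(x <- s) ('X - x%:P))`_(size s - k) = (-1) ^+ k * esym k s.
Proof.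
elim: s k => [|x s IH] k.
  by rewrite leqn0 => /eqP ->; rewrite big_nil coefC /= mulr1.
rewrite big_cons /= mulrBl coefB coefXM coefCM.
case: k => [_ | k lek].
  rewrite subn0 /= -[X in _`_X - _](subn0 (size s)) IH // mulr1.
  rewrite (@nth_default _ 0 (\prod_(j <- s) ('X - j%:P))) ?size_prod_XsubC //.
  by case: (s) => [|? ?] /=; rewrite !expr0 !mulr1 mulr0 subr0.
rewrite subSS; have [ltks | geks] := ltnP k (size s).
  have nz : (size s - k)%N != 0%N by rewrite subn_eq0 -ltnNge.
  rewrite (negPf nz) -subnS (IH k.+1 ltks) (IH k (ltnW ltks)) exprS; ring.
have -> : k = size s by apply/eqP; rewrite eqn_leq geks -ltnS lek.
rewrite subnn /=; have := IH _ (leqnn (size s)); rewrite subnn => ->.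
rewrite (@esym_gt_size s (size s).+1 (ltnSn _)) exprS; ring.
Qed.

Lemma newton_identities s :
  let e1 := esym 1 s in let e2 := esym 2 s in
  let e3 := esym 3 s in let e4 := esym 4 s in
  [/\ psum 1 s = e1, psum 2 s = e1 ^+ 2 - 2 * e2,
      psum 3 s = e1 ^+ 3 - 3 * e1 * e2 + 3 * e3 &
      psum 4 s = e1 ^+ 4 - 4 * e1 ^+ 2 * e2 + 2 * e2 ^+ 2 + 4 * e1 * e3 - 4 * e4].
Proof.
rewrite /psum; elim: s => [|x s [p1 p2 p3 p4]] /=; rewrite ?big_nil ?big_cons.
  by split; rewrite ?expr0n /= ?mulr0 ?subr0 ?addr0.
by rewrite p1 p2 p3 p4 esym0; split; ring.
Qed.

Lemma psum4_prod_XsubC s : (4 <= size s)%N ->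
  let f := \prod_(x <- s) ('X - x%:P) in
  f`_(size s - 1) = 0 ->
  psum 4 s = 2 * (f`_(size s - 2) ^+ 2 - 2 * f`_(size s - 4)).
Proof.
move=> le4s f; have [p1 _ _ ->] := newton_identities s.
rewrite !coef_prod_XsubC_esym ?(leq_trans _ le4s) //.
rewrite expr1 mulN1r => /eqP; rewrite oppr_eq0 => /eqP ->.
by rewrite -signr_odd /= expr0; ring.
Qed.

End Coefficients.

Lemma spn_seq_extrema (R : realDomainType) (s : seq R) m M :
  m \in s -> M \in s -> {in s, forall x, m <= x <= M} -> spn_seq s = M - m.
Proof.
move=> ms Ms bounds; have span_ge0 : 0 <= M - m.
  by rewrite subr_ge0; case/andP: (bounds m ms).
apply/eqP; rewrite eq_le; apply/andP; split.
  rewrite /spn_seq big_seq; apply: bigmax_le => // x xs.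
  rewrite big_seq; apply: bigmax_le => // y ys; rewrite ler_norml.
  by case/andP: (bounds x xs); case/andP: (bounds y ys) => *; apply/andP; split; lra.
apply: (bigmax_sup_seq _ _ _ _ _ Ms) => //.
by apply: (bigmax_sup_seq _ _ _ _ _ ms) => //; exact: ler_norm.
Qed.

Lemma seq_extrema (R : realDomainType) (s : seq R) : s != [::] ->
  exists m M, [/\ m \in s, M \in s & {in s, forall x, m <= x <= M}].
Proof.
case: s => // x0 s _; set s0 := x0 :: s.
have x0s : x0 \in s0 by exact: mem_head.
exists (\big[Num.min/x0]_(x <- s0) x), (\big[Num.max/x0]_(x <- s0) x); split.
- by rewrite big_seq; apply: (big_ind (fun y => y \in s0)) => // y z ys zs; rewrite minEle; case: ifP.
- by rewrite big_seq; apply: (big_ind (fun y => y \in s0)) => // y z ys zs; rewrite maxEle; case: ifP.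
- by move=> x xs; rewrite ge_bigmin_seq ?le_bigmax_seq.
Qed.

Lemma ler_sum_mem (R : numDomainType) (I : eqType) (s : seq I) (F : I -> R) i :
  (forall j, 0 <= F j) -> i \in s -> F i <= \sum_(j <- s) F j.
Proof.
move=> F_ge0 i_s; rewrite (perm_big _ (perm_to_rem i_s)) big_cons lerDl.
exact: sumr_ge0.
Qed.

Lemma ler_sum_mem2 (R : numDomainType) (I : eqType) (s : seq I) (F : I -> R) i j :
  (forall k, 0 <= F k) -> i \in s -> j \in s -> j != i ->
  F i + F j <= \sum_(k <- s) F k.
Proof.
move=> F_ge0 i_s j_s ji; rewrite (perm_big _ (perm_to_rem i_s)) big_cons lerD2l.
exact/ler_sum_mem/rem_mem.
Qed.

Section QuarticPowerSum.
Variable R : realDomainType.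
Implicit Types m M x : R.

Lemma quartic_le_chord m M x : m <= x <= M ->
  x ^+ 4 <= - m * M * (M ^+ 2 + M * m + m ^+ 2) + (M + m) * (M ^+ 2 + m ^+ 2) * x.
Proof.
case/andP=> mx xM; rewrite -subr_ge0.
have -> : - m * M * (M ^+ 2 + M * m + m ^+ 2) + (M + m) * (M ^+ 2 + m ^+ 2) * x - x ^+ 4
    = (x - m) * (M - x) * (x ^+ 2 + (m + M) * x + (m ^+ 2 + m * M + M ^+ 2)) by ring.
apply: mulr_ge0; first by apply: mulr_ge0; lra.
have := sqr_ge0 (2 * x + m + M); have := sqr_ge0 (m + M).
have := sqr_ge0 m; have := sqr_ge0 M; nra.
Qed.

Variables (s : seq R) (m M : R).
Hypothesis bounds : {in s, forall x, m <= x <= M}.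

Lemma psum4_le_span4 : \sum_(x <- s) x = 0 ->
  12 * psum 4 s <= (size s)%:R * (M - m) ^+ 4.
Proof.
move=> sum0; set a := - m * M * (M ^+ 2 + M * m + m ^+ 2).
have chord : psum 4 s <= a *+ size s.
  apply: (le_trans (y := \sum_(x <- s) (a + (M + m) * (M ^+ 2 + m ^+ 2) * x))).
    by rewrite /psum !big_seq; apply: ler_sum => x xs; exact/quartic_le_chord/bounds.
  by rewrite big_split /= big_const_seq count_predT iter_addr_0 -mulr_sumr sum0 mulr0 addr0.
have square : 12 * a <= (M - m) ^+ 4.
  by rewrite -subr_ge0 (_ : _ - _ = ((M - m) ^+ 2 + 6 * m * M) ^+ 2) ?sqr_ge0 // /a; ring.
rewrite -mulr_natr in chord.
have := ler_wpM2l (ler0n R (size s)) square; nra.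
Qed.

Lemma span4_le_psum4 : m \in s -> M \in s -> (M - m) ^+ 4 <= 8 * psum 4 s.
Proof.
move=> ms Ms; have p4_ge0 : 0 <= psum 4 s.
  by apply: sumr_ge0 => x _; exact: exprn_even_ge0.
have [-> | Mm] := eqVneq M m; first by rewrite subrr expr0n /= mulr_ge0.
have ext_le : m ^+ 4 + M ^+ 4 <= psum 4 s.
  by apply: (ler_sum_mem2 (F := fun x => x ^+ 4)) => // x; exact: exprn_even_ge0.
have gap : (M - m) ^+ 4 <= 8 * (m ^+ 4 + M ^+ 4).
  rewrite -subr_ge0.
  have -> : 8 * (m ^+ 4 + M ^+ 4) - (M - m) ^+ 4
      = (M + m) ^+ 2 * (5 * (M - m) ^+ 2 + 2 * M ^+ 2 + 2 * m ^+ 2) by ring.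
  by rewrite mulr_ge0 ?sqr_ge0 // !addr_ge0 // mulr_ge0 ?sqr_ge0.
lra.
Qed.

End QuarticPowerSum.

Lemma root4_exp4 (R : rcfType) (d : R) : 0 <= d -> root4 (d ^+ 4) = d.
Proof.
move=> d_ge0; have -> : d ^+ 4 = (d ^+ 2) ^+ 2 by rewrite -exprM.
by rewrite /root4 sqrtr_sqr ger0_norm ?sqr_ge0 // sqrtr_sqr ger0_norm.
Qed.

Lemma root4_le (R : rcfType) (y d : R) : 0 <= d -> y <= d ^+ 4 -> root4 y <= d.
Proof. by move=> d_ge0 yd; rewrite -(root4_exp4 d_ge0) /root4; do 2 apply: ler_wsqrtr. Qed.

Lemma le_root4 (R : rcfType) (y d : R) : 0 <= d -> d ^+ 4 <= y -> d <= root4 y.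
Proof. by move=> d_ge0 dy; rewrite -(root4_exp4 d_ge0) /root4; do 2 apply: ler_wsqrtr. Qed.

Theorem theorem4p1 (R : rcfType) (n : nat) (f : {poly R}) (s : seq R) :
  (5 <= n)%N ->
  size f = n.+1 -> f \is monic -> f`_(n - 1) = 0 ->
  f = \prod_(x <- s) ('X - x%:P) ->
  let a2 := f`_(n - 2) in
  let a4 := f`_(n - 4) in
  root4 (24 / n%:R * (a2 ^+ 2 - 2 * a4)) <= spn_seq s
  /\ spn_seq s <= 2 * root4 (a2 ^+ 2 - 2 * a4).
Proof.
move=> le5n size_f _ f_n1 f_eq a2 a4.
have size_s : size s = n by apply/eqP; rewrite -eqSS -size_f f_eq size_prod_XsubC.
have n_gt0 : 0 < n%:R :> R by rewrite ltr0n (leq_trans _ le5n).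
have sum_s : \sum_(x <- s) x = 0.
  have s_ne0 : size s != 0%N by rewrite size_s -lt0n (leq_trans _ le5n).
  by apply/eqP; rewrite -oppr_eq0 -(coefPn_prod_XsubC s_ne0) -f_eq size_s -subn1 f_n1.
have p4E : psum 4 s = 2 * (a2 ^+ 2 - 2 * a4).
  by rewrite psum4_prod_XsubC -?f_eq size_s ?(leq_trans _ le5n).
have s_nil : s != [::] by rewrite -size_eq0 size_s -lt0n (leq_trans _ le5n).
have [m [M [ms Ms bounds]]] := seq_extrema s_nil.
rewrite (spn_seq_extrema ms Ms bounds).
have span_ge0 : 0 <= M - m by rewrite subr_ge0; case/andP: (bounds m ms).
split.
  apply: root4_le => //; rewrite mulrAC ler_pdivrMr // mulrC.
  by have := psum4_le_span4 bounds sum_s; rewrite size_s p4E; lra.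
rewrite -ler_pdivrMl // mulrC; apply: le_root4; first by lra.
by have := span4_le_psum4 ms Ms; rewrite p4E expr_div_n; lra.
Qed.
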